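(* In FSM the following equivalences hold: (1) CUT(fin) $\Leftrightarrow$ CC(fin); (2) CUT(2) $\Leftrightarrow$ CC(2).
   Context: Framework (FSM). Work in ZF with a fixed infinite set $A$ of atoms; $S_A$ is the group of bijections of $A$ fixing all but finitely many atoms; $Fix(S)$ is the set of $\pi\in S_A$ fixing each element of $S\subseteq A$; $S$ supports $x$ if $\pi\cdot x=x$ for all $\pi\in Fix(S)$. An invariant set is an $S_A$-set all of whose elements have finite supports; subsets carry $\pi\star Z=\{\pi\cdot z:z\in Z\}$; $\mathbb N$ carries the trivial action. A function (including a sequence $n\mapsto X_n$ or a choice function) is finitely supported if there is a finite $S$ with $f(\pi\cdot x)=\pi\cdot f(x)$ for all $\pi\in Fix(S)$. Principles: CC(fin): for every invariant set $X$ and every sequence $(X_n)_{n\in\mathbb N}$ of nonempty finite subsets of $X$ such that $n\mapsto X_n$ is finitely supported, there is a finitely supported choice function on $\{X_n\}$. CUT(fin): for every invariant set $X$ and every sequence $(X_n)_{n\in\mathbb N}$ of nonempty finite subsets of $X$ with $n\mapsto X_n$ finitely supported, there is a finitely supported surjection $\mathbb N\to\bigcup_nX_n$. CC(2) and CUT(2) are the same statements with ''nonempty finite'' replaced by ''two-element''. *)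

From Stdlib Require Import List.
Import ListNotations.
Set Implicit Arguments.

Section FSM.
Variable A : Type.

Definition infinite_atoms : Prop := forall l : list A, exists a, ~ In a l.

Record perm := Perm {
  pfun : A -> A;
  pinv : A -> A;
  pfunK : forall a, pinv (pfun a) = a;
  pinvK : forall a, pfun (pinv a) = a;
  psupp : list A;
  pfix : forall a, ~ In a psupp -> pfun a = a }.

Definition pid : perm.
Proof. refine (@Perm (fun a => a) (fun a => a) _ _ [] _); auto. Defined.

Definition pcomp (p q : perm) : perm.
Proof.
  refine (@Perm (fun a => pfun p (pfun q a)) (fun a => pinv q (pinv p a)) _ _
                (psupp p ++ psupp q) _).
  - intro a; rewrite pfunK, pfunK; reflexivity.
  - intro a; rewrite pinvK, pinvK; reflexivity.
  - intros a H. rewrite (pfix q), (pfix p); auto;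
      intro H'; apply H; apply in_or_app; auto.
Defined.

Definition fixes (S : list A) (p : perm) : Prop :=
  forall a, In a S -> pfun p a = a.

Record invset := InvSet {
  car : Type;
  act : perm -> car -> car;
  act_ext : forall p q x, (forall a, pfun p a = pfun q a) -> act p x = act q x;
  act_id : forall x, act pid x = x;
  act_comp : forall p q x, act (pcomp p q) x = act p (act q x);
  act_fs : forall x, exists S : list A, forall p, fixes S p -> act p x = x }.

Definition set_act (X : invset) (p : perm) (Z : car X -> Prop) : car X -> Prop :=
  fun y => exists z, Z z /\ y = act X p z.

Definition set_eq (X : invset) (Z W : car X -> Prop) : Prop :=
  forall y, Z y <-> W y.

Definition nonempty_finite (X : invset) (Z : car X -> Prop) : Prop :=
  (exists x, Z x) /\ (exists l : list (car X), forall x, Z x <-> In x l).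

Definition two_elem (X : invset) (Z : car X -> Prop) : Prop :=
  exists x y, x <> y /\ forall z, Z z <-> (z = x \/ z = y).

(* The sequence n |-> X_n is finitely supported (N has the trivial action). *)
Definition fs_seq (X : invset) (Xs : nat -> car X -> Prop) : Prop :=
  exists S : list A, forall p, fixes S p -> forall n, @set_eq X (Xs n) (@set_act X p (Xs n)).

Definition fs_choice (X : invset) (Xs : nat -> car X -> Prop) : Prop :=
  exists g : (car X -> Prop) -> car X,
    (forall n, Xs n (g (Xs n))) /\
    exists S : list A, forall p, fixes S p -> forall n m,
      @set_eq X (Xs m) (@set_act X p (Xs n)) -> g (Xs m) = act X p (g (Xs n)).

Definition fs_surj_onto_union (X : invset) (Xs : nat -> car X -> Prop) : Prop :=
  exists h : nat -> car X,
    (forall k, exists n, Xs n (h k)) /\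
    (forall n x, Xs n x -> exists k, h k = x) /\
    exists S : list A, forall p, fixes S p -> forall k, act X p (h k) = h k.

Definition CC_fin : Prop :=
  forall (X : invset) (Xs : nat -> car X -> Prop),
    (forall n, @nonempty_finite X (Xs n)) -> @fs_seq X Xs -> @fs_choice X Xs.

Definition CUT_fin : Prop :=
  forall (X : invset) (Xs : nat -> car X -> Prop),
    (forall n, @nonempty_finite X (Xs n)) -> @fs_seq X Xs -> @fs_surj_onto_union X Xs.

Definition CC_2 : Prop :=
  forall (X : invset) (Xs : nat -> car X -> Prop),
    (forall n, @two_elem X (Xs n)) -> @fs_seq X Xs -> @fs_choice X Xs.

Definition CUT_2 : Prop :=
  forall (X : invset) (Xs : nat -> car X -> Prop),
    (forall n, @two_elem X (Xs n)) -> @fs_seq X Xs -> @fs_surj_onto_union X Xs.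

End FSM.

From Stdlib Require Import List Lia Classical ClassicalEpsilon Cantor Wf_nat.
Import ListNotations.
Set Implicit Arguments.

(* Both equivalences are instances of one argument, parametric in a class P of
   "admissible" subsets (nonempty finite sets, resp. two-element sets).

   CUT => CC: given a finitely supported surjection h : N -> U X_n, choose in
   each X_n the element h k with k least such that h k lies in X_n.  This choice
   only depends on X_n as a set, and is supported by the supports of h and of
   the sequence.

   CC => CUT: replace each X_n by the set Enum(X_n) of its duplicate-free
   enumerations, a subset of the invariant set of finite lists.  Enum(X_n) is
   again admissible (finite if X_n is; {[x;y],[y;x]} if X_n = {x,y}), and
   n |-> Enum(X_n) is supported like n |-> X_n.  A finitely supported choice of
   enumerations l_n, composed with Cantor's pairing k = <n,i> |-> l_n[i],
   yields the surjection. *)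

Section FSM_choice.
Variable A : Type.

Definition subset_class : Type := forall X : invset A, (car X -> Prop) -> Prop.

Definition CC_for (P : subset_class) : Prop :=
  forall X Xs, (forall n, P X (Xs n)) -> fs_seq X Xs -> fs_choice X Xs.

Definition CUT_for (P : subset_class) : Prop :=
  forall X Xs, (forall n, P X (Xs n)) -> fs_seq X Xs -> fs_surj_onto_union X Xs.

Definition perm_inv (p : perm A) : perm A.
Proof.
  refine (@Perm A (pinv p) (pfun p) (pinvK p) (pfunK p) (psupp p) _).
  intros a Ha. rewrite <- (pfix p a Ha) at 1. apply pfunK.
Defined.

Lemma fixes_app_l (S T : list A) p : fixes (S ++ T) p -> fixes S p.
Proof. intros H a Ha; apply H, in_or_app; auto. Qed.

Lemma fixes_app_r (S T : list A) p : fixes (S ++ T) p -> fixes T p.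
Proof. intros H a Ha; apply H, in_or_app; auto. Qed.

Lemma act_invK (X : invset A) p x : act X (perm_inv p) (act X p x) = x.
Proof.
  rewrite <- act_comp. rewrite <- (act_id X x) at 2. apply act_ext.
  intro a; apply pfunK.
Qed.

Lemma act_Kinv (X : invset A) p x : act X p (act X (perm_inv p) x) = x.
Proof.
  rewrite <- act_comp. rewrite <- (act_id X x) at 2. apply act_ext.
  intro a; apply pinvK.
Qed.

Lemma act_inj (X : invset A) p x y : act X p x = act X p y -> x = y.
Proof. intro E. rewrite <- (act_invK X p x), E. apply act_invK. Qed.

Definition p_invariant (X : invset A) p (Z : car X -> Prop) : Prop :=
  forall x, Z (act X p x) <-> Z x.

Lemma p_invariant_inv X p Z : p_invariant X p Z -> p_invariant X (perm_inv p) Z.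
Proof. intros H x. rewrite <- (H (act X (perm_inv p) x)), act_Kinv. tauto. Qed.

Lemma set_eq_p_invariant X p Z : set_eq X Z (set_act X p Z) -> p_invariant X p Z.
Proof.
  intros H x. split.
  - intro Hx. destruct (proj1 (H _) Hx) as [z [Hz E]].
    apply act_inj in E. subst; auto.
  - intro Hx. apply H. exists x; auto.
Qed.

Definition list_invset (X : invset A) : invset A.
Proof.
  refine (@InvSet A (list (car X)) (fun p l => map (act X p) l) _ _ _ _).
  - intros p q l H. apply map_ext. intro; apply act_ext; auto.
  - intro l. rewrite <- (map_id l) at 2. apply map_ext, act_id.
  - intros p q l. rewrite map_map. apply map_ext, act_comp.
  - induction x as [|x l [S HS]].
    + exists []; auto.
    + destruct (act_fs X x) as [T HT]. exists (T ++ S). intros p Hp. simpl.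
      rewrite HT, HS; eauto using fixes_app_l, fixes_app_r.
Defined.

Definition Enum (X : invset A) (Z : car X -> Prop) : list (car X) -> Prop :=
  fun l => NoDup l /\ forall x, In x l <-> Z x.

Lemma Enum_map X p Z l :
  p_invariant X p Z -> Enum X Z l -> Enum X Z (map (act X p) l).
Proof.
  intros Hp [Hnd Hl]. split.
  - apply NoDup_map_NoDup_ForallPairs; auto. intros x y _ _; apply act_inj.
  - intro x. rewrite in_map_iff. split.
    + intros [y [<- Hy]]. apply Hp, Hl; auto.
    + intro Hx. exists (act X (perm_inv p) x). split; [apply act_Kinv|].
      apply Hl, (p_invariant_inv Hp); auto.
Qed.

Lemma Enum_invariant X p Z : p_invariant X p Z ->
  set_eq (list_invset X) (Enum X Z) (set_act (list_invset X) p (Enum X Z)).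
Proof.
  intros Hp l. split.
  - intro Hl. exists (map (act X (perm_inv p)) l). split.
    + apply Enum_map; auto. apply p_invariant_inv; auto.
    + simpl. rewrite map_map. rewrite <- (map_id l) at 1. apply map_ext.
      intro; symmetry; apply act_Kinv.
  - intros [l' [Hl' ->]]. apply Enum_map; auto.
Qed.

(* The i-th entry of L, defaulting to the head of L; unlike [nth] the default is
   transported by maps, so [pick] commutes with the action. *)
Definition pick (T : Type) (d : T) (L : list T) (i : nat) : T := nth i L (hd d L).

Lemma pick_map (T U : Type) (f : T -> U) d L i :
  pick (f d) (map f L) i = f (pick d L i).
Proof.
  unfold pick. destruct L as [|t L]; [destruct i; reflexivity|].
  exact (map_nth f (t :: L) t i).
Qed.

Lemma pick_In (T : Type) d (L : list T) i : L <> [] -> In (pick d L i) L.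
Proof.
  intro HL. unfold pick. destruct (nth_in_or_default i L (hd d L)) as [H|E]; auto.
  rewrite E. destruct L; [congruence|left; auto].
Qed.

Lemma pick_nth (T : Type) d (L : list T) i : i < length L -> pick d L i = nth i L d.
Proof. intro Hi. apply nth_indep; auto. Qed.

Lemma cc_to_cut (P : subset_class)
  (P_inhabited : forall X Z, P X Z -> exists x, Z x)
  (P_Enum : forall X Z, P X Z -> P (list_invset X) (Enum X Z)) :
  CC_for P -> CUT_for P.
Proof.
  intros HCC X Xs HP [S HS].
  pose (Ys := fun n => Enum X (Xs n)).
  assert (Ys_inv : forall p, fixes S p -> forall n,
            set_eq (list_invset X) (Ys n) (set_act (list_invset X) p (Ys n))).
  { intros p Hp n. apply Enum_invariant, set_eq_p_invariant, HS, Hp. }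
  destruct (HCC (list_invset X) Ys (fun n => P_Enum _ _ (HP n)) (ex_intro _ S Ys_inv))
    as [g [Hg [Sg HSg]]].
  destruct (P_inhabited _ _ (HP 0)) as [x0 _].
  assert (g_nonempty : forall n, g (Ys n) <> []).
  { intros n E. destruct (P_inhabited _ _ (HP n)) as [x Hx].
    apply (proj2 (Hg n)) in Hx. rewrite E in Hx. destruct Hx. }
  exists (fun k => let (n, i) := of_nat k in pick x0 (g (Ys n)) i). split; [|split].
  - intro k. destruct (of_nat k) as [n i]. exists n.
    apply (proj2 (Hg n)), pick_In, g_nonempty.
  - intros n x Hx. apply (proj2 (Hg n)), In_nth with (d := x0) in Hx.
    destruct Hx as [i [Hi <-]]. exists (to_nat (n, i)).
    rewrite cancel_of_to. apply pick_nth; auto.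
  - exists (Sg ++ S). intros p Hp k. destruct (of_nat k) as [n i].
    assert (g_equiv : g (Ys n) = map (act X p) (g (Ys n))).
    { apply (HSg p (fixes_app_l _ _ Hp) n n), Ys_inv. eapply fixes_app_r; eauto. }
    rewrite <- (pick_map (act X p)). simpl in g_equiv. rewrite <- g_equiv.
    destruct (g (Ys n)) eqn:E; [exfalso; apply (g_nonempty n E)|reflexivity].
Qed.

Definition least (Q : nat -> Prop) (k : nat) : Prop := Q k /\ forall j, Q j -> k <= j.

Lemma least_exists (Q : nat -> Prop) n : Q n -> exists k, least Q k.
Proof.
  intro Hn. destruct (dec_inh_nat_subset_has_unique_least_element Q)
    as [k [Hk _]]; eauto using classic.
Qed.

Lemma least_unique (Q : nat -> Prop) k k' : least Q k -> least Q k' -> k = k'.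
Proof. intros [H1 H2] [H1' H2']. specialize (H2 _ H1'); specialize (H2' _ H1); lia. Qed.

Lemma cut_to_cc (P : subset_class) (P_inhabited : forall X Z, P X Z -> exists x, Z x) :
  CUT_for P -> CC_for P.
Proof.
  intros HCUT X Xs HP Hseq.
  destruct (HCUT X Xs HP Hseq) as [h [_ [h_onto [Sh HSh]]]].
  destruct Hseq as [S HS].
  pose (index := fun Z : car X -> Prop => epsilon (inhabits 0) (least (fun k => Z (h k)))).
  assert (index_least : forall n, least (fun k => Xs n (h k)) (index (Xs n))).
  { intro n. apply epsilon_spec.
    destruct (P_inhabited _ _ (HP n)) as [x Hx]. destruct (h_onto n x Hx) as [k <-].
    eapply least_exists; eauto. }
  exists (fun Z => h (index Z)). split.
  - intro n. exact (proj1 (index_least n)).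
  - exists (Sh ++ S). intros p Hp n m Hnm.
    assert (same_set : forall y, Xs m y <-> Xs n y).
    { intro y. rewrite (Hnm y). symmetry. apply HS. eapply fixes_app_r; eauto. }
    assert (same_index : index (Xs m) = index (Xs n)).
    { apply (@least_unique (fun k => Xs m (h k))); [exact (index_least m)|].
      destruct (index_least n) as [H1 H2].
      split; [apply same_set; auto|intros j Hj; apply H2, same_set; auto]. }
    rewrite same_index. symmetry. apply HSh. eapply fixes_app_l; eauto.
Qed.

Lemma nodup_exists (T : Type) (l0 : list T) :
  exists l, NoDup l /\ forall x, In x l <-> In x l0.
Proof.
  assert (dec : forall x y : T, {x = y} + {x <> y})
    by (intros x y; apply excluded_middle_informative).
  exists (nodup dec l0). split; [apply NoDup_nodup|intro; apply nodup_In].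
Qed.

Lemma finite_subset (T : Type) (Q : T -> Prop) (L : list T) :
  (forall x, Q x -> In x L) -> exists L', forall x, Q x <-> In x L'.
Proof.
  intro HQ.
  exists (filter (fun x => if excluded_middle_informative (Q x) then true else false) L).
  intro x. rewrite filter_In.
  destruct excluded_middle_informative; split; intuition; congruence.
Qed.

Fixpoint lists_upto (T : Type) (l0 : list T) (n : nat) : list (list T) :=
  match n with
  | 0 => [[]]
  | S n => [] :: flat_map (fun a => map (cons a) (lists_upto l0 n)) l0
  end.

Lemma lists_upto_complete (T : Type) (l0 : list T) n l :
  incl l l0 -> length l <= n -> In l (lists_upto l0 n).
Proof.
  revert l; induction n as [|n IH]; intros [|a l] Hincl Hlen; simpl in *; auto; try lia.
  right. apply in_flat_map. exists a. split; [apply Hincl; left; auto|].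
  apply in_map, IH; [intros x Hx; apply Hincl; right; auto|lia].
Qed.

(* A nonempty finite set has a nonempty finite set of enumerations: they are
   duplicate-free lists over a fixed finite list, hence of bounded length. *)
Lemma Enum_nonempty_finite X Z :
  nonempty_finite X Z -> nonempty_finite (list_invset X) (Enum X Z).
Proof.
  intros [_ [l0 Hl0]]. split.
  - destruct (nodup_exists l0) as [l [Hnd Hl]]. exists l. split; auto.
    intro y. rewrite Hl, Hl0. tauto.
  - apply finite_subset with (L := lists_upto l0 (length l0)).
    intros l [Hnd Hl]. assert (Hincl : incl l l0) by (intros y Hy; apply Hl0, Hl, Hy).
    apply lists_upto_complete, NoDup_incl_length; auto.
Qed.

Lemma Enum_pair X (x y : car X) l : x <> y ->
  Enum X (fun z => z = x \/ z = y) l <-> l = [x; y] \/ l = [y; x].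
Proof.
  intro Hxy. split.
  - intros [Hnd Hl].
    assert (Hlen : length l <= 2).
    { change 2 with (length [x; y]). apply NoDup_incl_length; auto.
      intros z Hz. apply Hl in Hz. destruct Hz; subst; simpl; auto. }
    assert (Hx : In x l) by (apply Hl; auto).
    assert (Hy : In y l) by (apply Hl; auto).
    destruct l as [|a [|b [|c l]]]; simpl in *; try lia; try tauto.
    + destruct Hx as [<-|[]], Hy as [<-|[]]; tauto.
    + destruct Hx as [<-|[<-|[]]], Hy as [->|[->|[]]]; tauto.
  - assert (Hnd : forall a b : car X, a <> b -> NoDup [a; b]).
    { intros a b Hab. constructor; [simpl; intuition|repeat constructor; auto]. }
    intros [-> | ->]; (split; [apply Hnd; auto|simpl; intuition]).
Qed.

Lemma Enum_two_elem X Z : two_elem X Z -> two_elem (list_invset X) (Enum X Z).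
Proof.
  intros [x [y [Hxy HZ]]]. exists [x; y], [y; x]. split.
  - intro E. inversion E; auto.
  - intro l. rewrite <- (Enum_pair X l Hxy).
    unfold Enum. split; intros [Hnd Hl]; split; auto; intro z; rewrite Hl, HZ; tauto.
Qed.

Lemma nonempty_finite_inhabited (X : invset A) (Z : car X -> Prop) : nonempty_finite X Z -> exists x, Z x.
Proof. intros [H _]; exact H. Qed.

Lemma two_elem_inhabited (X : invset A) (Z : car X -> Prop) : two_elem X Z -> exists x, Z x.
Proof. intros [x [y [_ H]]]. exists x; apply H; auto. Qed.

End FSM_choice.

Theorem mainTheorem20 (A : Type) (HA : infinite_atoms A) :
  (CUT_fin A <-> CC_fin A) /\ (CUT_2 A <-> CC_2 A).
Proof.
  split; split.
  - exact (@cut_to_cc A (@nonempty_finite A) (@nonempty_finite_inhabited A)).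
  - exact (@cc_to_cut A (@nonempty_finite A) (@nonempty_finite_inhabited A)
                     (@Enum_nonempty_finite A)).
  - exact (@cut_to_cc A (@two_elem A) (@two_elem_inhabited A)).
  - exact (@cc_to_cut A (@two_elem A) (@two_elem_inhabited A) (@Enum_two_elem A)).
Qed.
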